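(* Let $Y=[y_{ij}]$ be an $N\times k$ array with entries in $\{-1,1\}$, let $\ell\subseteq\{1,\dots,k\}$ with $|\ell|=r>0$, and let $g\in G(k)^{\rm OD}$. Then $J_r(\ell)(g(Y))=\pm J_{r'}(\ell')(Y)$ for some $\ell'\subseteq\{1,\dots,k\}$, where $r'=|\ell'|\in\{r,r+1\}$ if $r$ is odd and $r'\in\{r,r-1\}$ if $r$ is even.
   Context: For $\ell\subseteq\{1,\dots,k\}$ with $|\ell|=r\ge1$, the $J$-characteristic is $J_r(\ell)(Y)=\sum_{i=1}^N\prod_{j\in\ell}y_{ij}$, and $J_0(\emptyset)(Y)=N$. $G(k)^{\rm OD}$ is the group of permutations of $\{-1,1\}^k$ generated by coordinate permutations, sign changes of single coordinates, and $R_i(z_1,\dots,z_k)=(z_1z_i,\dots,z_{i-1}z_i,z_i,z_{i+1}z_i,\dots,z_kz_i)$ for $i=1,\dots,k$; $g(Y)$ is obtained by applying $g$ to each row of $Y$. *)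

From HB Require Import structures.
From mathcomp Require Import all_boot all_order all_algebra all_fingroup.
Set Implicit Arguments. Unset Strict Implicit. Unset Printing Implicit Defensive.
Import GRing.Theory Num.Theory.

(* Points of {-1,1}^k, encoded as boolean vectors: true <-> -1, false <-> 1.
   Under this encoding the product of two signs is xor. *)
Definition pt (k : nat) := {ffun 'I_k -> bool}.

Definition sgn (b : bool) : int := if b then (-1)%R else 1%R.

Definition cperm_fun k (s : 'S_k) (z : pt k) : pt k := [ffun j => z (s j)].
Lemma cperm_inj k (s : 'S_k) : injective (cperm_fun s).
Proof.
apply: (can_inj (g := cperm_fun s^-1)) => z; apply/ffunP => j.
by rewrite !ffunE permKV.
Qed.
Definition cperm k (s : 'S_k) : {perm pt k} := perm (@cperm_inj k s).

Definition flip_fun k (i : 'I_k) (z : pt k) : pt k :=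
  [ffun j => if j == i then ~~ z j else z j].
Lemma flip_inj k (i : 'I_k) : injective (flip_fun i).
Proof.
apply: (can_inj (g := flip_fun i)) => z; apply/ffunP => j.
by rewrite !ffunE; case: (j == i) => //; rewrite negbK.
Qed.
Definition flip k (i : 'I_k) : {perm pt k} := perm (@flip_inj k i).

(* R_i(z) = (z_1 z_i, ..., z_{i-1} z_i, z_i, z_{i+1} z_i, ..., z_k z_i) *)
Definition R_fun k (i : 'I_k) (z : pt k) : pt k :=
  [ffun j => if j == i then z j else z j (+) z i].
Lemma R_inj k (i : 'I_k) : injective (R_fun i).
Proof.
apply: (can_inj (g := R_fun i)) => z; apply/ffunP => j.
rewrite !ffunE eqxx; case: eqP => // _.
by rewrite -addbA addbb addbF.
Qed.
Definition Rgen k (i : 'I_k) : {perm pt k} := perm (@R_inj k i).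

Definition GOD k : {set {perm pt k}} :=
  <<[set cperm s | s : 'S_k] :|: [set flip i | i : 'I_k]
     :|: [set Rgen i | i : 'I_k]>>%g.

Definition J N k (l : {set 'I_k}) (Y : 'M[int]_(N, k)) : int :=
  (\sum_(i < N) \prod_(j in l) Y i j)%R.

Definition row_pt N k (Y : 'M[int]_(N, k)) (i : 'I_N) : pt k :=
  [ffun j => Y i j == (-1)%R].
Definition actY N k (g : {perm pt k}) (Y : 'M[int]_(N, k)) : 'M[int]_(N, k) :=
  \matrix_(i, j) sgn (g (row_pt Y i) j).

(* J_l(Y) is the sum over the rows z of Y of the character
   chi_l(z) = prod_(j in l) z_j, so it suffices to show that chi_l o g = +-chi_l'
   for a suitable l'.  Coordinate permutations relabel l, a sign change only
   changes the sign, and R_i multiplies every z_j with j <> i by z_i, whence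
   chi_l o R_i = z_i^|l| chi_(l \ i): this is chi_(l \ i) up to sign when |l| is
   even and chi_(l U i) when |l| is odd.  In every case ceil(|l'|/2) = ceil(|l|/2);
   this invariant survives composition, so it holds on the whole group
   G(k)^OD, and it forces |l'| into the stated range. *)

From mathcomp Require Import all_boot all_order all_algebra all_fingroup.
From mathcomp Require Import zify.
Set Implicit Arguments. Unset Strict Implicit. Unset Printing Implicit Defensive.
Import GRing.Theory Num.Theory.

Lemma eq_uphalf_cases (a b : nat) : uphalf a = uphalf b -> 0 < b ->
  if odd b then a = b \/ a = b.+1 else a = b \/ a = b.-1.
Proof. by case: ifP; rewrite !uphalf_half; lia. Qed.

Lemma uphalfS_odd n : odd n -> uphalf n.+1 = uphalf n.
Proof. by rewrite !uphalf_half; lia. Qed.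

Local Open Scope ring_scope.

Lemma sgnE (b : bool) : sgn b = (-1) ^+ b.
Proof. by case: b. Qed.

Lemma sgn_addb (a b : bool) : sgn (a (+) b) = sgn a * sgn b.
Proof. by rewrite !sgnE signr_addb. Qed.

Lemma sgnX_odd (b : bool) (n : nat) : sgn b ^+ n = sgn b ^+ odd n.
Proof. by rewrite sgnE -!exprM mulnC [in RHS]mulnC !exprM !signr_odd. Qed.

Definition walsh k (l : {set 'I_k}) (z : pt k) : int := \prod_(j in l) sgn (z j).

Lemma walshD1 k (l : {set 'I_k}) (i : 'I_k) (z : pt k) :
  walsh l z = sgn (z i) ^+ (i \in l) * walsh (l :\ i) z.
Proof.
have [il | il] := boolP (i \in l); first by rewrite /walsh (big_setD1 i il).
by rewrite mul1r; congr walsh; apply/esym/setDidPl; rewrite disjoint_sym disjoints1.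
Qed.

Lemma walsh_cperm k (s : 'S_k) (l : {set 'I_k}) (z : pt k) :
  walsh l (cperm s z) = walsh (s @: l) z.
Proof.
rewrite /walsh big_imset /=; last exact: in2W (@perm_inj _ s).
by apply: eq_bigr => j _; rewrite permE ffunE.
Qed.

Lemma walsh_flip k (i : 'I_k) (l : {set 'I_k}) (z : pt k) :
  walsh l (flip i z) = (-1) ^+ (i \in l) * walsh l z.
Proof.
rewrite [LHS](walshD1 _ i) [in RHS](walshD1 _ i) mulrA; congr (_ * _).
  by rewrite permE ffunE eqxx; case: (i \in l); case: (z i).
by apply: eq_bigr => j; rewrite !inE permE ffunE => /andP [/negbTE ->].
Qed.

Lemma walsh_Rgen k (i : 'I_k) (l : {set 'I_k}) (z : pt k) :
  walsh l (Rgen i z) = sgn (z i) ^+ odd #|l| * walsh (l :\ i) z.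
Proof.
have off_i : walsh (l :\ i) (Rgen i z) = sgn (z i) ^+ #|l :\ i| * walsh (l :\ i) z.
  rewrite /walsh -prodr_const -big_split /=; apply: eq_bigr => j.
  by rewrite !inE permE ffunE => /andP [/negbTE -> _]; rewrite sgn_addb mulrC.
rewrite [LHS](walshD1 _ i) off_i permE ffunE eqxx mulrA -exprD -sgnX_odd.
by rewrite [#|l|](cardsD1 i).
Qed.

Lemma walsh_setU1 k (i : 'I_k) (l : {set 'I_k}) (z : pt k) :
  walsh (i |: l) z = sgn (z i) * walsh (l :\ i) z.
Proof. by rewrite (walshD1 _ i) setU11 setDUl setDv set0U. Qed.

Definition walsh_covariant k (g : {perm pt k}) : Prop :=
  forall l : {set 'I_k}, exists (l' : {set 'I_k}) (e : bool),
    uphalf #|l'| = uphalf #|l| /\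
    forall z : pt k, walsh l (g z) = (-1) ^+ e * walsh l' z.

Lemma cperm_covariant k (s : 'S_k) : walsh_covariant (cperm s).
Proof.
move=> l; exists (s @: l), false; split; first by rewrite card_imset //; apply: perm_inj.
by move=> z; rewrite walsh_cperm mul1r.
Qed.

Lemma flip_covariant k (i : 'I_k) : walsh_covariant (flip i).
Proof. by move=> l; exists l, (i \in l); split => // z; rewrite walsh_flip. Qed.

Lemma Rgen_covariant k (i : 'I_k) : walsh_covariant (Rgen i).
Proof.
move=> l; exists (if odd #|l| then i |: l else l :\ i), false; split.
  have [il | il] := boolP (i \in l); case: ifP => odd_l.
  - by rewrite (setUidPr _) // sub1set.
  - by move: odd_l; rewrite [#|l|](cardsD1 i) il add1n oddS => /negbFE /uphalfS_odd ->.
  - by rewrite cardsU1 il uphalfS_odd.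
  - by rewrite (setDidPl _) // disjoint_sym disjoints1.
by move=> z; rewrite walsh_Rgen mul1r; case: ifP => _; rewrite ?walsh_setU1 ?mul1r.
Qed.

Lemma covariant1 k : walsh_covariant (1 : {perm pt k}).
Proof. by move=> l; exists l, false; split => // z; rewrite perm1 mul1r. Qed.

Lemma covariantM k (g h : {perm pt k}) :
  walsh_covariant g -> walsh_covariant h -> walsh_covariant (g * h).
Proof.
move=> cov_g cov_h l.
have [l1 [e1 [half1 walsh1]]] := cov_h l.
have [l2 [e2 [half2 walsh2]]] := cov_g l1.
exists l2, (e1 (+) e2); split; first by rewrite half2 half1.
by move=> z; rewrite permM walsh1 walsh2 signr_addb mulrA.
Qed.

Lemma GOD_covariant k (g : {perm pt k}) : g \in GOD k -> walsh_covariant g.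
Proof.
move=> /gen_prodgP [n [gs gen_gs ->]].
apply: (big_ind (@walsh_covariant k)); [exact: covariant1 | exact: covariantM |].
move=> m _; move: (gen_gs m); rewrite !inE -!orbA.
by case/or3P => /imsetP [x _ ->];
  [exact: cperm_covariant | exact: flip_covariant | exact: Rgen_covariant].
Qed.

Lemma J_actY N k (l : {set 'I_k}) (g : {perm pt k}) (Y : 'M[int]_(N, k)) :
  J l (actY g Y) = \sum_(i < N) walsh l (g (row_pt Y i)).
Proof. by apply: eq_bigr => i _; apply: eq_bigr => j _; rewrite mxE. Qed.

Lemma J_walsh N k (l : {set 'I_k}) (Y : 'M[int]_(N, k)) :
  (forall i j, Y i j = 1 \/ Y i j = -1) ->
  J l Y = \sum_(i < N) walsh l (row_pt Y i).
Proof.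
move=> signY; apply: eq_bigr => i _; apply: eq_bigr => j _.
by rewrite ffunE; case: (signY i j) => ->.
Qed.

Local Close Scope ring_scope.

Theorem lemma7 (N k : nat) (Y : 'M[int]_(N, k))
  (hY : forall i j, Y i j = 1%R \/ Y i j = (-1)%R)
  (l : {set 'I_k}) (hr : 0 < #|l|)
  (g : {perm pt k}) (hg : g \in GOD k) :
  exists (l' : {set 'I_k}) (e : bool),
    J l (actY g Y) = ((-1) ^+ e * J l' Y)%R /\
    (if odd #|l| then #|l'| = #|l| \/ #|l'| = #|l|.+1
     else #|l'| = #|l| \/ #|l'| = #|l|.-1).
Proof.
have [l' [e [half_l' walsh_l']]] := GOD_covariant hg l.
exists l', e; split; last exact: eq_uphalf_cases.
rewrite J_actY (J_walsh _ hY) mulr_sumr.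
by apply: eq_bigr => i _; rewrite walsh_l'.
Qed.
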